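(* Let $I\subset F$ be a two-sided ideal generated by finitely many monomials, with $d$ the maximal degree of a finite monomial basis of $I$, and $A=F/I$. Let $M=\langle e_i\bar w_{ij}\rangle\subset\bigoplus_{i=1}^rA[-\delta_i]$ be a finitely generated monomial right submodule, where $\bar w_{ij}=w_{ij}+I$ with $w_{ij}\in W\setminus I$, let $\Delta_{ij}=\delta_i+\deg w_{ij}$, $\Delta=\max\Delta_{ij}$, and $\varphi:\bigoplus_{i,j}A[-\Delta_{ij}]\to\bigoplus_iA[-\delta_i]$, $\epsilon_{ij}\mapsto e_i\bar w_{ij}$. Then the right syzygy module $K=\mathrm{Ker}\,\varphi$ is finitely generated and monomial (generated by elements $\epsilon_{ij}(u+I)$ with $u\in W$), and the maximal degree of an element of a minimal monomial basis of $K$ is at most $\Delta+d-1$.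
   Context: $\mathbb K$ is a field, $F=\mathbb K\langle x_1,\dots,x_n\rangle$ the free associative algebra with standard grading, $W$ its set of monomials. $A[-\delta]_e=A_{e-\delta}$; $\bigoplus_iA[-\delta_i]$ is the graded free right $A$-module with basis $e_i$ of degree $\delta_i$, and $\bigoplus_{i,j}A[-\Delta_{ij}]$ the graded free right $A$-module with basis $\epsilon_{ij}$ of degree $\Delta_{ij}$. *)

From HB Require Import structures.
From mathcomp Require Import all_boot all_order all_algebra.
Set Implicit Arguments. Unset Strict Implicit. Unset Printing Implicit Defensive.
Import Order.TTheory GRing.Theory Num.Theory.
Local Open Scope ring_scope.

(* Monomials of F = K<x_1..x_n> are words over the alphabet 'I_n; the degree
   of a monomial is its length. *)
Notation word n := (seq 'I_n).

(* The two-sided monomial ideal I generated by the finite set G of monomials: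
   a monomial lies in I iff some generator is a factor (infix) of it. *)
Definition inI (n : nat) (G : seq (word n)) (u : word n) : bool :=
  has (fun g => infix g u) G.

Definition monomial_basis (n : nat) (G : seq (word n)) : Prop :=
  uniq G /\ forall g h, g \in G -> h \in G -> g != h -> ~~ infix g h.

(* Elements of the graded free right A-module P = (+)_{k<m} A[-Delta_k]
   (A = F/I) are represented by their coefficient functions
   f k u = coefficient of eps_k (u + I), for u a normal word (u notin I). *)
Definition mfun (K : fieldType) (n m : nat) := 'I_m -> word n -> K.

Definition is_elt (K : fieldType) (n m : nat) (G : seq (word n)) (f : mfun K n m)
  : Prop :=
  (forall k u, inI G u -> f k u = 0) /\
  exists N : nat, forall k u, (N < size u)%N -> f k u = 0.

Definition rmul (K : fieldType) (n m : nat) (G : seq (word n)) (f : mfun K n m)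
  (v : word n) : mfun K n m :=
  fun k u => if suffix v u && ~~ inI G u then f k (take (size u - size v) u)
             else 0.

Definition mono (K : fieldType) (n m : nat) (G : seq (word n)) (k : 'I_m)
  (u : word n) : mfun K n m :=
  fun k' u' => if [&& k' == k, u' == u & ~~ inI G u] then 1 else 0.

Definition in_span (K : fieldType) (n m : nat) (G : seq (word n))
  (S : seq (mfun K n m)) (f : mfun K n m) : Prop :=
  exists t : seq (nat * word n * K),
    forall k u, f k u =
      \sum_(p <- t) p.2 * rmul G (nth (fun _ _ => 0) S p.1.1) p.1.2 k u.

(* phi : (+)_k A[-Delta_k] -> (+)_{i<r} A[-delta_i],  eps_k |-> e_{idx k} (w_k + I).
   Coefficient of e_i (x + I) in phi f, x a word. *)
Definition phi (K : fieldType) (n m r : nat) (G : seq (word n))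
  (idx : 'I_m -> 'I_r) (w : 'I_m -> word n) (f : mfun K n m)
  (i : 'I_r) (x : word n) : K :=
  if inI G x then 0 else
  \sum_(k < m | (idx k == i) && prefix (w k) x) f k (drop (size (w k)) x).

Definition in_ker (K : fieldType) (n m r : nat) (G : seq (word n))
  (idx : 'I_m -> 'I_r) (w : 'I_m -> word n) (f : mfun K n m) : Prop :=
  is_elt G f /\ forall i x, phi G idx w f i x = 0.

From HB Require Import structures.
From mathcomp Require Import all_boot all_order all_algebra.
From mathcomp Require Import zify.
Set Implicit Arguments. Unset Strict Implicit. Unset Printing Implicit Defensive.
Import Order.TTheory GRing.Theory Num.Theory.
Local Open Scope ring_scope.

(* An element f of the syzygy module vanishes at every pair (k, u) with w_k u
   normal: the coefficient of e_(idx k) (w_k u + I) in phi f is f k u alone,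
   because the w_l with the same target are prefix-incomparable. Conversely
   every element supported on pairs with w_k u in I lies in the kernel, so the
   kernel is spanned by the eps_k (u + I) with w_k u in I. Such a u has a
   shortest prefix u' with w_k u' in I, and eps_k (u + I) = eps_k (u' + I) (u'' + I)
   for u = u' u''; these shortest prefixes are mutually prefix-incomparable,
   which makes the basis minimal. Finally a generator g of I occurring in
   w_k u' must end at the last letter of u' (w_k u' without it is normal) and
   start inside w_k (u' is normal), so |u'| < |g| <= d. *)

Lemma prefix_total (T : eqType) (a b s : seq T) :
  prefix a s -> prefix b s -> prefix a b || prefix b a.
Proof.
rewrite prefixE => /eqP <-; rewrite prefixE => /eqP <-.
case: (leqP (size a) (size b)) => [le_ab | /ltnW le_ba].
  by rewrite -(take_takel s le_ab) prefix_take.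
by rewrite -(take_takel s le_ba) prefix_take orbT.
Qed.

Lemma infix_take_pred (T : eqType) (g s1 s2 : seq T) c :
  infix g (take (size (s1 ++ g ++ c :: s2)).-1 (s1 ++ g ++ c :: s2)).
Proof.
rewrite catA take_cat size_cat /= addnS /= ltnNge leq_addr /=.
by rewrite -catA; apply: infix_infix.
Qed.

Lemma suffix_take_eq (T : eqType) (v x u : seq T) :
  (suffix v x && (take (size x - size v) x == u)) = (x == u ++ v).
Proof.
apply/idP/eqP => [|->]; last by rewrite suffix_suffix size_cat addnK take_size_cat // eqxx.
by case/andP=> /suffixP[s ->] /eqP <-; rewrite size_cat addnK take_size_cat.
Qed.

Fixpoint words_upto (n l : nat) : seq (word n) :=
  if l is l'.+1 then [::] :: [seq a :: s | a <- enum 'I_n, s <- words_upto n l']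
  else [:: [::]].

Lemma mem_words_upto n l (u : word n) : (u \in words_upto n l) = (size u <= l)%N.
Proof.
elim: l u => [|l IH] [|a u] //=; rewrite in_cons /= ltnS.
apply/allpairsP/idP => [[[b s] /= [_ s_l [_ ->]]] | le_ul]; first by rewrite -IH.
by exists (a, u); rewrite /= mem_enum IH.
Qed.

Section Words.
Variables (n : nat) (G : seq (word n)).

Lemma inI_infix s t : inI G s -> infix s t -> inI G t.
Proof. by case/hasP=> g gG gs st; apply/hasP; exists g => //; apply: infix_trans st. Qed.

Lemma inI_catr s t : inI G s -> inI G (s ++ t).
Proof. by move=> Is; apply: inI_infix Is (prefix_infix s t). Qed.

Definition obstruction (v u : word n) : bool :=
  [&& ~~ inI G u, inI G (v ++ u) &
      all (fun p => ~~ inI G (v ++ take p u)) (iota 0 (size u))].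

Lemma obstruction_prefix_free v u u' :
  obstruction v u -> obstruction v u' -> prefix u' u -> u' = u.
Proof.
move=> ob_u /and3P[_ Iu' _] /prefixP[[|a s] Eu]; first by rewrite Eu cats0.
move: ob_u; rewrite Eu => /and3P[_ _ /allP/(_ (size u'))].
by rewrite take_size_cat // Iu' mem_iota size_cat addnS ltnS leq_addr => /(_ isT).
Qed.

Lemma exists_obstruction_prefix v u :
  ~~ inI G u -> inI G (v ++ u) -> exists2 u', prefix u' u & obstruction v u'.
Proof.
move=> nu Iu.
have exP : exists p, inI G (v ++ take p u) by exists (size u); rewrite take_size.
case: (ex_minnP exP) => p Ip p_min.
exists (take p u); first exact: prefix_take.
apply/and3P; split => //.
  by apply: contra nu => It; apply: inI_infix It (infix_take u p).
apply/allP => q; rewrite mem_iota add0n size_take_min => /andP[_ lt_q].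
rewrite take_takel; last by lia.
by apply/negP => /p_min; lia.
Qed.

Lemma obstruction_size v u :
  ~~ inI G v -> obstruction v u -> (0 < size u < \max_(g <- G) size g)%N.
Proof.
move=> nv /and3P[nu /hasP[g gG /infixP[s1 [s2 E]]] /allP normal_prefixes].
have u_gt0 : (0 < size u)%N.
  case: (posnP (size u)) => [/size0nil u0|//]; case/negP: nv.
  by apply/hasP; exists g => //; apply/infixP; exists s1, s2; rewrite -E u0 cats0.
have : ~~ inI G (v ++ take (size u).-1 u) by apply: normal_prefixes; rewrite mem_iota; lia.
have -> : v ++ take (size u).-1 u = take (size (v ++ u)).-1 (v ++ u).
  rewrite take_cat size_cat; case: (size u) u_gt0 => // k _.
  by rewrite addnS /= ltnNge leq_addr addKn.
case: s2 E => [|c s2] E; last first.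
  by rewrite E => /negP[]; apply/hasP; exists g => //; apply: infix_take_pred.
move=> _; rewrite u_gt0 /=; apply: leq_trans (leq_bigmax_seq _ gG isT).
case: (leqP (size v) (size s1)) => [le_vs1 | lt_s1v]; last first.
  move/(congr1 size): E; rewrite !size_cat addn0 => Es.
  by rewrite -(ltn_add2l (size s1)) -Es ltn_add2r.
case/negP: nu; apply: (@inI_infix g); first by apply/hasP; exists g => //; apply: infix_refl.
rewrite -(drop_size_cat u (erefl (size v))) E cats0 drop_cat.
case: ifP => _; first exact: suffix_infix.
by rewrite (eqP le_vs1) drop0 infix_refl.
Qed.

End Words.

Definition obstructions (n m : nat) (G : seq (word n)) (w : 'I_m -> word n)
  : seq ('I_m * word n) :=
  undup [seq b <- [seq (k, u) | k <- enum 'I_m, u <- words_upto n (\max_(g <- G) size g)]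
        | obstruction G (w b.1) b.2].

Lemma mem_obstructions n m (G : seq (word n)) (w : 'I_m -> word n) :
  (forall k, ~~ inI G (w k)) ->
  forall b, (b \in obstructions G w) = obstruction G (w b.1) b.2.
Proof.
move=> normal_w [k u]; rewrite mem_undup mem_filter /= andb_idr // => ob.
apply: allpairs_f; rewrite ?mem_enum // mem_words_upto.
by have /andP[_ /ltnW] := obstruction_size (normal_w k) ob.
Qed.

Section Monomials.
Variables (K : fieldType) (n m : nat) (G : seq (word n)).

Lemma rmul_mono (k : 'I_m) u v : rmul G (mono K G k u) v =2 mono K G k (u ++ v).
Proof.
move=> k' x; rewrite /rmul /mono; have [->|neq] := eqVneq x (u ++ v).
  rewrite suffix_suffix size_cat addnK take_size_cat // eqxx /=.
  have [Iuv|nuv] := boolP (inI G (u ++ v)); first by rewrite andbF.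
  by rewrite (contra (@inI_catr _ _ _ _) nuv).
have := suffix_take_eq v x u; rewrite (negbTE neq) andbF.
by case: (suffix v x) => //= ->; rewrite andbF; case: ifP.
Qed.

Lemma mono_self (k : 'I_m) u : ~~ inI G u -> mono K G k u k u = 1.
Proof. by move=> nu; rewrite /mono !eqxx nu. Qed.

Lemma nth_monos (C : seq ('I_m * word n)) j :
  nth (fun _ _ => 0) [seq mono K G c.1 c.2 | c <- C] j = (fun _ _ => 0)
  \/ exists2 c, c \in C & nth (fun _ _ => 0) [seq mono K G c.1 c.2 | c <- C] j
                          = mono K G c.1 c.2.
Proof.
case: (ltnP j (size C)) => [|le_Cj]; last by left; rewrite nth_default ?size_map.
case: C => // c0 C lt_jC; right; exists (nth c0 (c0 :: C) j); first exact: mem_nth.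
exact: (nth_map c0).
Qed.

Lemma mono_expansion (f : mfun K n m) :
  is_elt G f -> exists s : seq ('I_m * word n),
    forall k u, f k u = \sum_(q <- s) f q.1 q.2 * mono K G q.1 q.2 k u.
Proof.
case=> f_normal [N f_bounded].
set s := undup [seq (k, u) | k <- enum 'I_m, u <- words_upto n N].
exists s => k u.
have other_terms0 q : q != (k, u) -> f q.1 q.2 * mono K G q.1 q.2 k u = 0.
  case: q => k' u' neq; rewrite /mono; case: ifP => [|_]; last by rewrite mulr0.
  by case/and3P=> /eqP ek /eqP eu; rewrite ek eu eqxx in neq.
case: (boolP ((k, u) \in s)) => [ku_s | ku_s].
  rewrite (bigD1_seq (k, u)) ?undup_uniq //= big1 ?addr0 => [|q /other_terms0 //].
  by rewrite /mono !eqxx /=; case: (boolP (inI G u)) => [/f_normal->|_]; rewrite ?mulr1 ?mul0r.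
rewrite big_seq big1 => [|q q_s]; last by apply: other_terms0; apply: contraNneq ku_s => <-.
apply: f_bounded; rewrite ltnNge; apply: contra ku_s => le_uN.
by rewrite mem_undup; apply: allpairs_f; rewrite ?mem_enum ?mem_words_upto.
Qed.

End Monomials.

Section Support.
Variables (K : fieldType) (n m : nat) (G : seq (word n)) (w : 'I_m -> word n).

Definition supp_inI (f : mfun K n m) : Prop :=
  is_elt G f /\ forall k u, ~~ inI G (w k ++ u) -> f k u = 0.

Lemma supp_inI_eq (f g : mfun K n m) : f =2 g -> supp_inI f -> supp_inI g.
Proof.
move=> fg [[f_normal [N f_bounded]] f_supp]; split; first split.
- by move=> k u Iu; rewrite -fg f_normal.
- by exists N => k u lt_Nu; rewrite -fg f_bounded.
- by move=> k u nI; rewrite -fg f_supp.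
Qed.

Lemma supp_inI0 : supp_inI (fun _ _ => 0).
Proof. by split=> //; split=> //; exists 0%N. Qed.

Lemma supp_inI_lin c (f g : mfun K n m) :
  supp_inI f -> supp_inI g -> supp_inI (fun k u => c * f k u + g k u).
Proof.
move=> [[f_normal [N1 f_bounded]] f_supp] [[g_normal [N2 g_bounded]] g_supp].
split; first split.
- by move=> k u Iu; rewrite f_normal ?g_normal // mulr0 addr0.
- by exists (maxn N1 N2) => k u lt_Nu; rewrite f_bounded ?g_bounded ?mulr0 ?addr0 //; lia.
- by move=> k u nI; rewrite f_supp ?g_supp // mulr0 addr0.
Qed.

Lemma supp_inI_rmul (f : mfun K n m) v : supp_inI f -> supp_inI (rmul G f v).
Proof.
move=> [[f_normal [N f_bounded]] f_supp]; split; first split.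
- by move=> k u Iu; rewrite /rmul Iu andbF.
- exists (N + size v)%N => k u lt_Nu; rewrite /rmul; case: ifP => // _.
  by apply: f_bounded; rewrite size_take_min; lia.
- move=> k u nI; rewrite /rmul; case: ifP => // /andP[/suffixP[s Eu] _].
  apply: f_supp; apply: contra nI; rewrite Eu size_cat addnK take_size_cat // catA.
  exact: inI_catr.
Qed.

Lemma supp_inI_mono k u : inI G (w k ++ u) -> supp_inI (mono K G k u).
Proof.
move=> Iwu; split; first split.
- move=> k' x Ix; rewrite /mono; case: ifP => // /and3P[_ /eqP ex nu].
  by rewrite ex (negbTE nu) in Ix.
- by exists (size u) => k' x; rewrite /mono; case: ifP => // /and3P[_ /eqP-> _]; rewrite ltnn.
- move=> k' x nI; rewrite /mono; case: ifP => // /and3P[/eqP ek /eqP ex _].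
  by rewrite ek ex Iwu in nI.
Qed.

Lemma supp_inI_span (S : seq (mfun K n m)) f :
  (forall j, supp_inI (nth (fun _ _ => 0) S j)) -> in_span G S f -> supp_inI f.
Proof.
move=> S_supp [t ft]; apply: supp_inI_eq (fun k u => esym (ft k u)) _.
elim: t {ft} => [|p t IH]; first by apply: supp_inI_eq supp_inI0 => k u; rewrite big_nil.
apply: supp_inI_eq (supp_inI_lin p.2 (supp_inI_rmul p.1.2 (S_supp p.1.1)) IH) => k u.
by rewrite big_cons.
Qed.

Section Kernel.
Variables (r : nat) (idx : 'I_m -> 'I_r).

Lemma supp_inI_ker f : supp_inI f -> in_ker G idx w f.
Proof.
case=> f_elt f_supp; split=> // i x; rewrite /phi; case: ifP => // nx.
apply: big1 => k /andP[_ /prefixP[u Ex]]; apply: f_supp.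
by rewrite Ex drop_size_cat // -Ex nx.
Qed.

Hypothesis w_incomparable :
  forall k l, k != l -> idx k = idx l -> ~~ prefix (w k) (w l).

Lemma ker_supp_inI f : in_ker G idx w f -> supp_inI f.
Proof.
case=> f_elt f_phi; split=> // k u nI.
have := f_phi (idx k) (w k ++ u); rewrite /phi (negbTE nI) (bigD1 k) /=; last first.
  by rewrite eqxx prefix_prefix.
rewrite drop_size_cat // big1 ?addr0 // => l /andP[/andP[/eqP idx_lk pl] neq_lk].
case/orP: (prefix_total pl (prefix_prefix (w k) u)) => [pl_k | pk_l].
  by move: (w_incomparable neq_lk idx_lk); rewrite pl_k.
have neq_kl : k != l by rewrite eq_sym.
by move: (w_incomparable neq_kl (esym idx_lk)); rewrite pk_l.
Qed.

Lemma in_kerE f : in_ker G idx w f <-> supp_inI f.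
Proof. by split; [apply: ker_supp_inI | apply: supp_inI_ker]. Qed.

End Kernel.

Section ObstructionBasis.
Variable B : seq ('I_m * word n).
Hypothesis mem_B : forall b, (b \in B) = obstruction G (w b.1) b.2.

Let monos := [seq mono K G b.1 b.2 | b <- B].

Lemma span_obstructions_supp_inI f : in_span G monos f -> supp_inI f.
Proof.
apply: supp_inI_span => j.
case: (nth_monos K G B j) => [-> | [b bB ->]]; first exact: supp_inI0.
by apply: supp_inI_mono; move: bB; rewrite mem_B => /and3P[].
Qed.

Lemma mono_span_term k u :
  ~~ inI G u -> inI G (w k ++ u) ->
  exists jv : nat * word n, rmul G (nth (fun _ _ => 0) monos jv.1) jv.2 =2 mono K G k u.
Proof.
move=> nu Iu; have [u' /prefixP[v ->] ob] := exists_obstruction_prefix nu Iu.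
have ku'_B : (k, u') \in B by rewrite mem_B.
exists (index (k, u') B, v); rewrite /monos (nth_map (k, u')) ?index_mem //.
by rewrite nth_index //; apply: rmul_mono.
Qed.

Lemma sum_monos_in_span (s : seq ('I_m * word n)) (c : 'I_m * word n -> K) :
  (forall q, c q != 0 -> ~~ inI G q.2 /\ inI G (w q.1 ++ q.2)) ->
  in_span G monos (fun k u => \sum_(q <- s) c q * mono K G q.1 q.2 k u).
Proof.
move=> c_supp; elim: s => [|q s [t IH]]; first by exists [::] => k u; rewrite !big_nil.
have [cq0 | /c_supp[nu Iu]] := eqVneq (c q) 0.
  by exists t => k u; rewrite big_cons cq0 mul0r add0r IH.
have [[j v] E] := mono_span_term nu Iu.
by exists ((j, v, c q) :: t) => k u; rewrite !big_cons IH E.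
Qed.

Lemma supp_inI_span_obstructions f : supp_inI f -> in_span G monos f.
Proof.
move=> [[f_normal f_bounded] f_supp].
have [s fs] := mono_expansion (conj f_normal f_bounded).
have f_supp' (q : 'I_m * word n) :
    f q.1 q.2 != 0 -> ~~ inI G q.2 /\ inI G (w q.1 ++ q.2).
  move=> fq; split; first by apply: contra fq => /f_normal ->.
  by apply: contraNT fq => /f_supp ->.
have [t ft] := sum_monos_in_span s f_supp'.
by exists t => k u; rewrite fs ft.
Qed.

Lemma obstructions_minimal b :
  b \in B -> ~ in_span G [seq mono K G c.1 c.2 | c <- B & c != b] (mono K G b.1 b.2).
Proof.
rewrite mem_B => ob_b [t ht]; have := ht b.1 b.2.
rewrite mono_self; last by case/and3P: ob_b.
rewrite big1 => [/eqP|p _]; first by rewrite oner_eq0.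
case: (nth_monos K G [seq c <- B | c != b] p.1.1) => [-> | [c]].
  by rewrite /rmul; case: ifP; rewrite mulr0.
rewrite mem_filter mem_B => /andP[neq_cb ob_c] ->; rewrite rmul_mono /mono.
case: ifP => [/and3P[/eqP b1c /eqP b2c _] | _]; last by rewrite mulr0.
rewrite -b1c in ob_c; have c2b2 := obstruction_prefix_free ob_b ob_c.
have {c2b2} c2b2 : c.2 = b.2 by apply: c2b2; rewrite b2c prefix_prefix.
by case/eqP: neq_cb; move: b1c c2b2; case: b c {ob_b ob_c ht b2c} => [? ?] [? ?] /= -> ->.
Qed.

End ObstructionBasis.

End Support.

Theorem mainTheorem15 (K : fieldType) (n : nat) (G : seq (word n))
  (r : nat) (delta : 'I_r -> int) (m : nat) (idx : 'I_m -> 'I_r)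
  (w : 'I_m -> word n) :
  monomial_basis G ->
  (forall k, ~~ inI G (w k)) ->
  (* the e_{idx k} (w_k + I) form the (minimal) monomial basis of M *)
  (forall k l, k != l -> idx k = idx l -> ~~ prefix (w k) (w l)) ->
  let d : nat := \max_(g <- G) size g in
  let Delta (k : 'I_m) : int := delta (idx k) + (size (w k))%:Z in
  exists B : seq ('I_m * word n),
    [/\ uniq B,
        (forall b, b \in B -> ~~ inI G b.2 /\ in_ker G idx w (mono K G b.1 b.2)),
        (forall f : mfun K n m,
            in_ker G idx w f <-> in_span G [seq mono K G b.1 b.2 | b <- B] f),
        (forall b, b \in B ->
            ~ in_span G [seq mono K G c.1 c.2 | c <- B & c != b] (mono K G b.1 b.2))
      & (forall b, b \in B ->
            exists k : 'I_m, Delta b.1 + (size b.2)%:Z <= Delta k + d%:Z - 1)].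
Proof.
move=> _ normal_w w_incomparable d Delta.
have memB := mem_obstructions normal_w.
exists (obstructions G w); split.
- exact: undup_uniq.
- move=> b; rewrite memB => /and3P[nb Ib _]; split=> //.
  exact/supp_inI_ker/supp_inI_mono.
- move=> f; rewrite in_kerE //; split.
    exact: supp_inI_span_obstructions.
  exact: span_obstructions_supp_inI.
- exact: obstructions_minimal.
- move=> b; rewrite memB => /(obstruction_size (normal_w b.1))/andP[_ lt_bd].
  by exists b.1; move: lt_bd; rewrite /Delta -/d; move: (size b.2) => s; clearbody d; lia.
Qed.
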